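(* Assume (A), (R), (S), let $c$ be a global solution of (E) with initial condition in $\ell^1_1$, and let $\mu>\max\{2-\alpha-\beta,1\}$. Set $\rho_\mu=\gamma/(\mu-1)$, $p=(\mu+\gamma-1)/(1+\gamma-\alpha-\beta)$, $q=p/(p-1)$. Then there exists $T>0$ such that for all $t\ge T$ $$\mathfrak m_\mu(t)\le 2\Bigl(\frac{2^{2+\rho_\mu}(2^\mu\mu)^pq^{1-p}}{p}\widehat A_*^{\,p}\widehat{\mathfrak s}_1^{\,1+p+\rho_\mu}+2^{2+\rho_\mu}\widehat{\mathfrak s}_\mu\widehat{\mathfrak s}_1^{\,\rho_\mu}\Bigr)^{\frac1{1+\rho_\mu}}$$ and $$\mathfrak m_\mu(t)\le 4\Bigl(\frac{(2^\mu\mu)^pq^{1-p}}{p}\widehat A_*^{\,p}\widehat{\mathfrak s}_1^{\,1+p}+\widehat{\mathfrak s}_\mu\Bigr).$$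
   Context: Throughout, $\mathbb N=\{1,2,\dots\}$. We consider the forced discrete coagulation equation $$\frac{d}{dt}c_k=\frac12\sum_{\ell=1}^{k-1}a_{k-\ell,\ell}c_{k-\ell}c_\ell-c_k\sum_{\ell=1}^{\infty}a_{k,\ell}c_\ell+s_k-r_kc_k,\qquad k\in\mathbb N,\tag{E}$$ with real coefficients satisfying the standing assumptions: (A) $a_{k,\ell}=a_{\ell,k}$ and $0\le a_{k,\ell}\le A_*(k^\alpha\ell^\beta+k^\beta\ell^\alpha)$ for all $k,\ell\in\mathbb N$, with constants $A_*>0$, $\alpha,\beta\in[0,1]$, $\alpha\le\beta$; (R) $r_k\ge R_*k^\gamma$ for all $k\in\mathbb N$, with $R_*>0$ and $\gamma>\max\{0,\alpha+\beta-1\}$; (S) $s_k\ge 0$ for all $k$, and for every $\mu\ge0$ there is $\mathfrak s_\mu>0$ with $\sum_{k\ge1}k^\mu s_k\le\mathfrak s_\mu$. Write $\widehat A_*=A_*/R_*$ and $\widehat{\mathfrak s}_\mu=\mathfrak s_\mu/R_*$. For $\mu\ge0$, $\ell^1_\mu$ is the set of sequences $(c_k)_{k\in\mathbb N}$ with $c_k\in[0,\infty)$ and $\sum_k k^\mu c_k<\infty$. Solution: a sequence $c=(c_k)_{k\in\mathbb N}$ of continuous functions $c_k:[0,T)\to[0,\infty)$ is a solution of (E) on $[0,T)$ with initial condition $c^{\mathrm{in}}\in\ell^1_1$ if (i) for each $k$, (E) holds for all $t\in(0,T)$; (ii) for each $\mu\ge1$, $c\in L^\infty([0,T),\ell^1_1)\cap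 C^1((0,T),\ell^1_\mu)$; (iii) $c_k(0)=c_k^{\mathrm{in}}$ for all $k$. It is a global solution if $T=\infty$. Moments: $\mathfrak m_\mu(t)=\sum_k k^\mu c_k(t)$. *)

From Stdlib Require Import Reals Lra.
Open Scope R_scope.

(* Convention: a sequence (x_k)_{k in N}, N = {1,2,...}, is represented by a
   function x : nat -> R whose value at index 0 is ignored; x k is x_k for k>=1.
   Time-dependent sequences are c : nat -> R -> R, c k t = c_k(t). *)

Fixpoint fsum (f : nat -> R) (n : nat) : R :=
  match n with
  | O => 0
  | S m => fsum f m + f m
  end.

Definition wnorm_is (mu : R) (x : nat -> R) (L : R) : Prop :=
  infinite_sum (fun n => Rpower (INR (S n)) mu * Rabs (x (S n))) L.

Definition moment_is (mu : R) (x : nat -> R) (L : R) : Prop :=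
  infinite_sum (fun n => Rpower (INR (S n)) mu * x (S n)) L.

Definition in_l1 (mu : R) (x : nat -> R) : Prop :=
  (forall k, (1 <= k)%nat -> 0 <= x k) /\ exists L, moment_is mu x L.

(* right-hand side of (E) at index k, time t, given the value L of the
   loss series sum_{l>=1} a_{k,l} c_l(t) *)
Definition rhsE (a : nat -> nat -> R) (s r : nat -> R) (c : nat -> R -> R)
  (k : nat) (t : R) (L : R) : R :=
  / 2 * fsum (fun i => a (k - S i)%nat (S i) * c (k - S i)%nat t * c (S i) t) (k - 1)
  - c k t * L + s k - r k * c k t.

(* the map t |-> c(t) is C^1 from (0,infinity) to the weighted space l^1_mu
   (with norm sum k^mu |x_k|) *)
Definition C1_pos (mu : R) (c : nat -> R -> R) : Prop :=
  exists dc : nat -> R -> R,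
    (forall t, 0 < t ->
       (exists L, wnorm_is mu (fun k => c k t) L) /\
       (exists L, wnorm_is mu (fun k => dc k t) L)) /\
    (forall t, 0 < t -> forall eps, 0 < eps -> exists delta, 0 < delta /\
       forall h, h <> 0 -> Rabs h < delta -> 0 < t + h ->
         exists L, wnorm_is mu (fun k => (c k (t + h) - c k t) / h - dc k t) L
                   /\ L < eps) /\
    (forall t, 0 < t -> forall eps, 0 < eps -> exists delta, 0 < delta /\
       forall t', 0 < t' -> Rabs (t' - t) < delta ->
         exists L, wnorm_is mu (fun k => dc k t' - dc k t) L /\ L < eps).

Definition global_solution (a : nat -> nat -> R) (s r : nat -> R)
  (c : nat -> R -> R) (cin : nat -> R) : Prop :=
  (forall k, (1 <= k)%nat -> forall t, 0 <= t -> 0 <= c k t) /\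
  (forall k, (1 <= k)%nat -> forall t, 0 <= t -> forall eps, 0 < eps ->
     exists delta, 0 < delta /\ forall t', 0 <= t' -> Rabs (t' - t) < delta ->
       Rabs (c k t' - c k t) < eps) /\
  (forall k, (1 <= k)%nat -> forall t, 0 < t ->
     exists L, infinite_sum (fun n => a k (S n) * c (S n) t) L /\
               derivable_pt_lim (c k) t (rhsE a s r c k t L)) /\
  (exists M, forall t, 0 <= t ->
     exists L, wnorm_is 1 (fun k => c k t) L /\ L <= M) /\
  (forall mu, 1 <= mu -> C1_pos mu c) /\
  (forall k, (1 <= k)%nat -> c k 0 = cin k).

From Stdlib Require Import Reals Lra Lia Classical ClassicalEpsilon.
Open Scope R_scope.

(* Work with the truncated moments M_nu(t) = sum_{k <= N} k^nu c_k(t), which are differentiable,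
   and let N go to infinity only at the end.  Multiplying (E) by k^nu and symmetrising gives
     d/dt M_nu <= 1/2 sum ((k + l)^nu - k^nu - l^nu) a_{k,l} c_k c_l + S_nu - R_* M_{nu + gamma}.
   For nu = 1 the coagulation term vanishes, so M_1 eventually stays below any
   sigma > s_1 / R_*; we take sigma = 2^{1/(1+p)} s_1 / R_*.  For nu = mu, the bound
     (x^a y^b + x^b y^a) ((x + y)^mu - x^mu - y^mu) <= 2^{mu-1} mu (x y^{mu-1+a+b} + y x^{mu-1+a+b})
   and Young's inequality with exponent p bound the coagulation term by
   R_*/2 M_{mu + gamma} + R_* X, whence d/dt M_mu <= R_* Y - R_*/2 M_{mu + gamma} with
   Y = X + s_mu / R_*.  As M_{mu + gamma} >= M_mu and, by interpolation,
   M_{mu + gamma} >= M_mu^{1 + rho} / M_1^rho, a comparison argument gives both bounds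
   uniformly in N. *)

Lemma fsum_ext (f g : nat -> R) n :
  (forall i, (i < n)%nat -> f i = g i) -> fsum f n = fsum g n.
Proof.
  induction n as [|n IH]; intros H; simpl; auto.
  rewrite IH, H by (lia || (intros; apply H; lia)). reflexivity.
Qed.

Lemma fsum_le (f g : nat -> R) n :
  (forall i, (i < n)%nat -> f i <= g i) -> fsum f n <= fsum g n.
Proof.
  induction n as [|n IH]; intros H; simpl; [lra|].
  assert (fsum f n <= fsum g n) by (apply IH; intros; apply H; lia).
  specialize (H n ltac:(lia)). lra.
Qed.

Lemma fsum_const0 n : fsum (fun _ => 0) n = 0.
Proof. induction n as [|n IH]; simpl; [reflexivity|]. rewrite IH; lra. Qed.

Lemma fsum_ge0 (f : nat -> R) n : (forall i, (i < n)%nat -> 0 <= f i) -> 0 <= fsum f n.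
Proof. intros H. rewrite <- (fsum_const0 n). apply fsum_le; auto. Qed.

Lemma fsum_add (f g : nat -> R) n : fsum (fun i => f i + g i) n = fsum f n + fsum g n.
Proof. induction n as [|n IH]; simpl; [lra|]. rewrite IH; lra. Qed.

Lemma fsum_sub (f g : nat -> R) n : fsum (fun i => f i - g i) n = fsum f n - fsum g n.
Proof. induction n as [|n IH]; simpl; [lra|]. rewrite IH; lra. Qed.

Lemma fsum_scal (f : nat -> R) x n : fsum (fun i => x * f i) n = x * fsum f n.
Proof. induction n as [|n IH]; simpl; [lra|]. rewrite IH; lra. Qed.

Lemma fsum_le_len (f : nat -> R) n m :
  (n <= m)%nat -> (forall i, 0 <= f i) -> fsum f n <= fsum f m.
Proof. intros H Hf. induction H as [|m _ IH]; simpl; [lra|]. specialize (Hf m). lra. Qed.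

Lemma fsum_mul_fsum (f g : nat -> R) n m :
  fsum (fun i => fsum (fun j => f i * g j) m) n = fsum f n * fsum g m.
Proof. induction n as [|n IH]; simpl; [lra|]. rewrite IH, fsum_scal. lra. Qed.

Lemma fsum_exchange (h : nat -> nat -> R) n m :
  fsum (fun i => fsum (fun j => h i j) m) n = fsum (fun j => fsum (fun i => h i j) n) m.
Proof.
  induction n as [|n IH]; simpl; [now rewrite fsum_const0|].
  now rewrite IH, <- fsum_add.
Qed.

Lemma fsum_Sn_shift (f : nat -> R) n : fsum f (S n) = f 0%nat + fsum (fun i => f (S i)) n.
Proof. induction n as [|n IH]; simpl in *; [lra|]. rewrite IH. lra. Qed.

Lemma fsum_rev (f : nat -> R) n : fsum f n = fsum (fun i => f (n - S i)%nat) n.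
Proof.
  revert f; induction n as [|n IH]; intros f; [reflexivity|].
  rewrite (fsum_Sn_shift (fun i => f (S n - S i)%nat)).
  change (fsum f (S n)) with (fsum f n + f n).
  rewrite (IH f), (fsum_ext (fun i => f (n - S i)%nat) (fun i => f (S n - S (S i))%nat))
    by (intros; f_equal; lia).
  replace (S n - 1)%nat with n by lia. lra.
Qed.

(* Exchanging the order of summation over the triangle {(i, j) : i, j >= 1, i + j <= N + 1}. *)
Lemma fsum_antidiagonal (h : nat -> nat -> R) N :
  fsum (fun m => fsum (fun i => h (S m - S i)%nat (S i)) m) N
  = fsum (fun i => fsum (fun j => h (S i) (S j)) (N - S i)) N.
Proof.
  induction N as [|N IH]; [reflexivity|].
  change (fsum ?f (S N)) with (fsum f N + f N).
  rewrite IH, Nat.sub_diag. simpl fsum at 4.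
  rewrite (fsum_ext (fun i => fsum (fun j => h (S i) (S j)) (S N - S i))
              (fun i => fsum (fun j => h (S i) (S j)) (N - S i) + h (S i) (S (N - S i))))
    by (intros i Hi; replace (S N - S i)%nat with (S (N - S i)) by lia; reflexivity).
  rewrite fsum_add, (fsum_rev (fun i => h (S i) (S (N - S i)))).
  rewrite (fsum_ext (fun i => h (S (N - S i)) (S (N - S (N - S i))))
                    (fun i => h (S N - S i)%nat (S i))) by (intros; f_equal; lia).
  change (fsum (fun j => h (S N) (S j)) 0) with 0. lra.
Qed.

Lemma sum_f_R0_fsum (u : nat -> R) n : sum_f_R0 u n = fsum u (S n).
Proof. induction n as [|n IH]; simpl; [lra|]. rewrite IH. simpl. lra. Qed.

Lemma infinite_sum_ext (u v : nat -> R) L :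
  (forall n, u n = v n) -> infinite_sum u L -> infinite_sum v L.
Proof.
  intros E H eps He. destruct (H eps He) as [N HN]. exists N. intros n Hn.
  rewrite <- (sum_eq u v n) by auto. auto.
Qed.

Lemma fsum_le_infinite_sum (u : nat -> R) L :
  infinite_sum u L -> (forall i, 0 <= u i) -> forall N, fsum u N <= L.
Proof.
  intros Hs Hu N.
  assert (G : forall n, sum_f_R0 u n <= L).
  { apply growing_ineq; [|exact Hs]. intros n; simpl. specialize (Hu (S n)); lra. }
  destruct N as [|N]; [simpl; specialize (G 0%nat); specialize (Hu 0%nat); simpl in G; lra|].
  rewrite <- sum_f_R0_fsum. apply G.
Qed.

Lemma infinite_sum_le (u : nat -> R) L B :
  infinite_sum u L -> (forall N, fsum u N <= B) -> L <= B.
Proof.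
  intros Hs HB. destruct (Rle_dec L B) as [|Hn]; auto.
  destruct (Hs (L - B)) as [N HN]; [lra|].
  specialize (HN N (le_n _)). unfold Rdist in HN. rewrite sum_f_R0_fsum in HN.
  specialize (HB (S N)). apply Rabs_def2 in HN. lra.
Qed.

Lemma derivable_pt_lim_fsum (F : nat -> R -> R) (dF : nat -> R) t n :
  (forall m, (m < n)%nat -> derivable_pt_lim (F m) t (dF m)) ->
  derivable_pt_lim (fun s => fsum (fun m => F m s) n) t (fsum dF n).
Proof.
  induction n as [|n IH]; intros H; simpl.
  - apply derivable_pt_lim_const.
  - apply (derivable_pt_lim_plus (fun s => fsum (fun m => F m s) n) (F n)).
    + apply IH; intros; apply H; lia.
    + apply H; lia.
Qed.

Lemma Rpower_pos x y : 0 < Rpower x y.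
Proof. apply exp_pos. Qed.

Ltac Rpos := repeat first [ lra | apply Rpower_pos | apply Rmult_lt_0_compat
                           | apply Rplus_lt_0_compat | apply Rinv_0_lt_compat ].

Lemma Rpower_add_1 x r : 0 < x -> Rpower x (r + 1) = Rpower x r * x.
Proof. intros Hx. now rewrite Rpower_plus, Rpower_1. Qed.

Lemma ln_le_sub_1 x : 0 < x -> ln x <= x - 1.
Proof. intros Hx. pose proof (exp_ineq1_le (ln x)). rewrite exp_ln in H; lra. Qed.

Lemma weighted_amgm u v th : 0 < u -> 0 < v -> 0 <= th <= 1 ->
  Rpower u th * Rpower v (1 - th) <= th * u + (1 - th) * v.
Proof.
  intros Hu Hv Ht. set (A := th * u + (1 - th) * v).
  assert (HA : 0 < A) by (unfold A; destruct (Req_dec th 0); nra).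
  unfold Rpower. rewrite <- exp_plus, <- (exp_ln A) by auto.
  enough (E : ln u * th + ln v * (1 - th) <= ln A)
    by (destruct E as [E|E]; [left; apply exp_increasing | right; f_equal]; lra).
  assert (H1 := ln_le_sub_1 (u / A) ltac:(apply Rdiv_lt_0_compat; auto)).
  assert (H2 := ln_le_sub_1 (v / A) ltac:(apply Rdiv_lt_0_compat; auto)).
  unfold Rdiv in *. rewrite ln_mult, ln_Rinv in H1, H2 by (auto; apply Rinv_0_lt_compat; auto).
  assert (E : th * (u * / A - 1) + (1 - th) * (v * / A - 1) = A * / A - 1) by (unfold A; ring).
  rewrite Rinv_r in E by lra.
  assert (th * (ln u + - ln A) <= th * (u * / A - 1)) by (apply Rmult_le_compat_l; lra).
  assert ((1 - th) * (ln v + - ln A) <= (1 - th) * (v * / A - 1)) by (apply Rmult_le_compat_l; lra).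
  lra.
Qed.

Lemma Rpower_tangent_le a b r : 0 < a -> 0 < b -> 1 <= r ->
  Rpower a r + r * Rpower a (r - 1) * (b - a) <= Rpower b r.
Proof.
  intros Ha Hb Hr.
  assert (Hr' : 0 < / r <= 1)
    by (split; [apply Rinv_0_lt_compat; lra | rewrite <- Rinv_1; apply Rinv_le_contravar; lra]).
  pose proof (weighted_amgm (Rpower b r) (Rpower a r) (/ r) (Rpower_pos _ _) (Rpower_pos _ _)
                ltac:(lra)) as H.
  rewrite !Rpower_mult in H.
  replace (r * / r) with 1 in H by (field; lra).
  replace (r * (1 - / r)) with (r - 1) in H by (field; lra).
  rewrite Rpower_1 in H by auto.
  assert (Ea : Rpower a r = Rpower a (r - 1) * a)
    by (rewrite <- Rpower_add_1 by auto; f_equal; ring).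
  rewrite Ea in *.
  apply Rmult_le_compat_l with (r := r) in H; [|lra].
  replace (r * (/ r * Rpower b r + (1 - / r) * (Rpower a (r - 1) * a))) with
    (Rpower b r + (r - 1) * (Rpower a (r - 1) * a)) in H by (field; lra).
  nra.
Qed.

Lemma Rpower_superadditive x y mu : 0 < x -> 0 < y -> 1 <= mu ->
  Rpower x mu + Rpower y mu <= Rpower (x + y) mu.
Proof.
  intros Hx Hy Hm.
  replace mu with ((mu - 1) + 1) by ring. rewrite !Rpower_add_1 by lra.
  assert (Rpower x (mu - 1) <= Rpower (x + y) (mu - 1)) by (apply Rle_Rpower_l; lra).
  assert (Rpower y (mu - 1) <= Rpower (x + y) (mu - 1)) by (apply Rle_Rpower_l; lra).
  nra.
Qed.

Lemma Rpower_add_sub_le x y mu : 0 < x -> 0 < y -> 1 <= mu ->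
  Rpower (x + y) mu - Rpower y mu <= mu * Rpower (x + y) (mu - 1) * x.
Proof. intros Hx Hy Hm. pose proof (Rpower_tangent_le (x + y) y mu ltac:(lra) Hy Hm). nra. Qed.

Lemma Rpower_add_le_convex x y r : 0 < x -> 0 < y -> 1 <= r ->
  Rpower (x + y) r <= Rpower 2 (r - 1) * (Rpower x r + Rpower y r).
Proof.
  intros Hx Hy Hr. set (m := (x + y) / 2).
  pose proof (Rpower_tangent_le m x r ltac:(unfold m; lra) Hx Hr).
  pose proof (Rpower_tangent_le m y r ltac:(unfold m; lra) Hy Hr).
  assert (Em : Rpower (x + y) r = Rpower 2 (r - 1) * (2 * Rpower m r)).
  { replace (x + y) with (2 * m) by (unfold m; field).
    rewrite <- Rpower_mult_distr by (unfold m; lra).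
    replace (Rpower 2 r) with (Rpower 2 (r - 1) * 2)
      by (rewrite <- Rpower_add_1 by lra; f_equal; ring).
    ring. }
  rewrite Em. apply Rmult_le_compat_l; [left; apply Rpower_pos|].
  assert (m - x + (m - y) = 0) by (unfold m; field). nra.
Qed.

Lemma Rpower_cross_le x y al be : 0 < x <= y -> 0 <= al -> 0 <= be ->
  Rpower x al * Rpower y be + Rpower x be * Rpower y al
  <= Rpower y (al + be) + Rpower x (al + be).
Proof.
  intros Hxy Ha Hb. rewrite !Rpower_plus.
  assert (Rpower x al <= Rpower y al) by (apply Rle_Rpower_l; lra).
  assert (Rpower x be <= Rpower y be) by (apply Rle_Rpower_l; lra).
  nra.
Qed.

Lemma coag_increment_le x y mu : 0 < x <= y -> 1 <= mu ->
  Rpower (x + y) mu - Rpower x mu - Rpower y mu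
  <= Rpower 2 (mu - 1) * mu * (x * Rpower y (mu - 1)).
Proof.
  intros Hxy Hm.
  pose proof (Rpower_add_sub_le x y mu ltac:(lra) ltac:(lra) Hm).
  assert (Rpower (x + y) (mu - 1) <= Rpower 2 (mu - 1) * Rpower y (mu - 1))
    by (rewrite Rpower_mult_distr by lra; apply Rle_Rpower_l; lra).
  pose proof (Rpower_pos x mu).
  assert (mu * x * Rpower (x + y) (mu - 1) <= mu * x * (Rpower 2 (mu - 1) * Rpower y (mu - 1)))
    by (apply Rmult_le_compat_l; nra).
  nra.
Qed.

Lemma coag_increment_le_sym x y mu : 0 < x -> 0 < y -> 2 <= mu ->
  Rpower (x + y) mu - Rpower x mu - Rpower y mu
  <= Rpower 2 (mu - 1) * mu / 2 * (x * (Rpower x (mu - 1) + Rpower y (mu - 1))).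
Proof.
  intros Hx Hy Hm.
  pose proof (Rpower_add_sub_le x y mu Hx Hy ltac:(lra)).
  pose proof (Rpower_add_le_convex x y (mu - 1) Hx Hy ltac:(lra)).
  assert (E2 : Rpower 2 (mu - 1) = Rpower 2 (mu - 1 - 1) * 2)
    by (rewrite <- Rpower_add_1 by lra; f_equal; ring).
  pose proof (Rpower_pos x mu).
  assert (mu * x * Rpower (x + y) (mu - 1)
          <= mu * x * (Rpower 2 (mu - 1 - 1) * (Rpower x (mu - 1) + Rpower y (mu - 1))))
    by (apply Rmult_le_compat_l; nra).
  rewrite E2. nra.
Qed.

(* The case distinction mu <= 2 / mu >= 2 decides which of the two increment bounds is sharp enough. *)
Lemma coag_weight_le_ordered x y mu e : 0 < x <= y -> 1 <= mu -> 0 <= e ->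
  (Rpower y e + Rpower x e) * (Rpower (x + y) mu - Rpower x mu - Rpower y mu)
  <= Rpower 2 (mu - 1) * mu * (x * Rpower y (mu - 1 + e) + y * Rpower x (mu - 1 + e)).
Proof.
  intros Hxy Hm He.
  set (u := Rpower (x + y) mu - Rpower x mu - Rpower y mu).
  set (D := Rpower 2 (mu - 1) * mu).
  assert (HD : 0 < D) by (unfold D; pose proof (Rpower_pos 2 (mu - 1)); nra).
  assert (Hu : 0 <= u)
    by (pose proof (Rpower_superadditive x y mu ltac:(lra) ltac:(lra) Hm); unfold u; lra).
  assert (Hse : Rpower x e <= Rpower y e) by (apply Rle_Rpower_l; lra).
  pose proof (Rpower_pos x e). pose proof (Rpower_pos x (mu - 1)). pose proof (Rpower_pos y (mu - 1)).
  pose proof (coag_increment_le x y mu Hxy Hm) as Hu1. fold u D in Hu1.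
  assert (Ey : Rpower y (mu - 1 + e) = Rpower y (mu - 1) * Rpower y e) by apply Rpower_plus.
  assert (Ex : Rpower x (mu - 1 + e) = Rpower x (mu - 1) * Rpower x e) by apply Rpower_plus.
  rewrite Ey, Ex.
  destruct (Rle_dec mu 2) as [Hm2|Hm2].
  - assert (Hxy' : x * Rpower y (mu - 1) <= y * Rpower x (mu - 1)).
    { replace (mu - 1) with ((mu - 2) + 1) by ring. rewrite !Rpower_add_1 by lra.
      assert (Rpower y (mu - 2) <= Rpower x (mu - 2)).
      { replace (mu - 2) with (- (2 - mu)) by ring. rewrite !Rpower_Ropp.
        apply Rinv_le_contravar; [apply Rpower_pos | apply Rle_Rpower_l; lra]. }
      assert (x * y * Rpower y (mu - 2) <= x * y * Rpower x (mu - 2))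
        by (apply Rmult_le_compat_l; nra).
      lra. }
    assert (u * Rpower x e <= D * (x * Rpower y (mu - 1)) * Rpower x e)
      by (apply Rmult_le_compat_r; lra).
    assert (u * Rpower y e <= D * (x * Rpower y (mu - 1)) * Rpower y e)
      by (apply Rmult_le_compat_r; lra).
    assert (D * Rpower x e * (x * Rpower y (mu - 1)) <= D * Rpower x e * (y * Rpower x (mu - 1)))
      by (apply Rmult_le_compat_l; nra).
    nra.
  - pose proof (coag_increment_le_sym x y mu ltac:(lra) ltac:(lra) ltac:(lra)) as Hu2.
    fold u D in Hu2.
    assert (Hxx : x * Rpower x (mu - 1) <= y * Rpower x (mu - 1)) by nra.
    assert ((Rpower y e - Rpower x e) * u <= (Rpower y e - Rpower x e) * (D * (x * Rpower y (mu - 1))))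
      by (apply Rmult_le_compat_l; lra).
    assert (2 * Rpower x e * u
            <= 2 * Rpower x e * (D / 2 * (x * (Rpower x (mu - 1) + Rpower y (mu - 1)))))
      by (apply Rmult_le_compat_l; lra).
    assert (D * Rpower x e * (x * Rpower x (mu - 1)) <= D * Rpower x e * (y * Rpower x (mu - 1)))
      by (apply Rmult_le_compat_l; nra).
    nra.
Qed.

Lemma coag_weight_le x y mu al be : 0 < x -> 0 < y -> 1 <= mu -> 0 <= al -> 0 <= be ->
  (Rpower x al * Rpower y be + Rpower x be * Rpower y al)
    * (Rpower (x + y) mu - Rpower x mu - Rpower y mu)
  <= Rpower 2 (mu - 1) * mu * (x * Rpower y (mu - 1 + al + be) + y * Rpower x (mu - 1 + al + be)).
Proof.
  intros Hx Hy Hm Ha Hb.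
  assert (Hu : 0 <= Rpower (x + y) mu - Rpower x mu - Rpower y mu)
    by (pose proof (Rpower_superadditive x y mu Hx Hy Hm); lra).
  replace (mu - 1 + al + be) with (mu - 1 + (al + be)) by ring.
  destruct (Rle_dec x y) as [Hxy|Hxy].
  - eapply Rle_trans; [|apply coag_weight_le_ordered; lra].
    apply Rmult_le_compat_r; [lra | apply Rpower_cross_le; lra].
  - pose proof (coag_weight_le_ordered y x mu (al + be) ltac:(lra) Hm ltac:(lra)) as H.
    pose proof (Rpower_cross_le y x al be ltac:(lra) Ha Hb) as Hc.
    replace (Rpower (y + x) mu - Rpower y mu - Rpower x mu)
      with (Rpower (x + y) mu - Rpower x mu - Rpower y mu) in H by (rewrite Rplus_comm; ring).
    eapply Rle_trans; [|eapply Rle_trans; [exact H | right; ring]].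
    apply Rmult_le_compat_r; lra.
Qed.

Lemma Rpower_young y z e p : 0 < y -> 0 < z -> 1 < p ->
  Rpower y (e * (1 - / p)) <= z * (1 - / p) * Rpower y e + Rpower z (1 - p) / p.
Proof.
  intros Hy Hz Hp.
  assert (Hip : 0 < / p < 1)
    by (split; [apply Rinv_0_lt_compat; lra | rewrite <- Rinv_1; apply Rinv_lt_contravar; lra]).
  pose proof (weighted_amgm (z * Rpower y e) (Rpower z (1 - p)) (1 - / p)
    ltac:(apply Rmult_lt_0_compat; auto; apply Rpower_pos) (Rpower_pos _ _) ltac:(lra)) as H.
  rewrite <- Rpower_mult_distr, !Rpower_mult in H by (auto; apply Rpower_pos).
  replace (1 - (1 - / p)) with (/ p) in H by ring.
  replace (Rpower z (1 - / p) * Rpower y (e * (1 - / p)) * Rpower z ((1 - p) * / p)) with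
    (Rpower y (e * (1 - / p)) * (Rpower z (1 - / p + (1 - p) * / p))) in H
    by (rewrite Rpower_plus; ring).
  replace (1 - / p + (1 - p) * / p) with 0 in H by (field; lra).
  rewrite Rpower_O in H by auto. unfold Rdiv. lra.
Qed.

Lemma Rpower_interpolate k lam th e : 0 < k -> 0 < lam -> 0 <= th < 1 ->
  Rpower k (th + (1 - th) * e)
  <= th * lam * k + (1 - th) * Rpower lam (- (th / (1 - th))) * Rpower k e.
Proof.
  intros Hk Hl Ht.
  pose proof (weighted_amgm (lam * k) (Rpower lam (- (th / (1 - th))) * Rpower k e) th
    ltac:(nra) ltac:(apply Rmult_lt_0_compat; apply Rpower_pos) ltac:(lra)) as H.
  rewrite <- !Rpower_mult_distr, !Rpower_mult in H by (auto; try apply Rpower_pos; nra).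
  replace (Rpower lam th * Rpower k th
           * (Rpower lam (- (th / (1 - th)) * (1 - th)) * Rpower k (e * (1 - th))))
    with (Rpower lam (th + - (th / (1 - th)) * (1 - th)) * Rpower k (th + (1 - th) * e)) in H
    by (rewrite !Rpower_plus; replace (e * (1 - th)) with ((1 - th) * e) by ring; ring).
  replace (th + - (th / (1 - th)) * (1 - th)) with 0 in H by (field; lra).
  rewrite Rpower_O in H by auto. lra.
Qed.

Lemma coag_kernel_weight_le x y mu gam al be z p :
  0 < x -> 0 < y -> 1 <= mu -> 0 <= al -> 0 <= be -> 0 < z -> 1 < p ->
  mu - 2 + al + be = (mu + gam - 1) * (1 - / p) ->
  (Rpower x al * Rpower y be + Rpower x be * Rpower y al)
    * (Rpower (x + y) mu - Rpower x mu - Rpower y mu)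
  <= Rpower 2 (mu - 1) * mu * (z * (1 - / p))
       * (x * Rpower y (mu + gam) + Rpower x (mu + gam) * y)
     + Rpower 2 (mu - 1) * mu * (Rpower z (1 - p) / p) * (2 * (x * y)).
Proof.
  intros Hx Hy Hm Ha Hb Hz Hp He.
  assert (Y : forall v, 0 < v -> Rpower v (mu - 1 + al + be)
             <= z * (1 - / p) * Rpower v (mu + gam) + Rpower z (1 - p) / p * v).
  { intros v Hv. pose proof (Rpower_young v z (mu + gam - 1) p Hv Hz Hp) as HY.
    rewrite <- He in HY.
    replace (mu - 1 + al + be) with ((mu - 2 + al + be) + 1) by ring.
    replace (mu + gam) with ((mu + gam - 1) + 1) by ring.
    rewrite !Rpower_add_1 by auto.
    apply Rmult_le_compat_r with (r := v) in HY; [|lra]. nra. }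
  pose proof (coag_weight_le x y mu al be Hx Hy Hm Ha Hb) as HG.
  pose proof (Y y Hy) as Yy. pose proof (Y x Hx) as Yx.
  apply Rmult_le_compat_l with (r := x) in Yy; [|lra].
  apply Rmult_le_compat_l with (r := y) in Yx; [|lra].
  assert (HD : 0 < Rpower 2 (mu - 1) * mu) by (pose proof (Rpower_pos 2 (mu - 1)); nra).
  assert (Rpower 2 (mu - 1) * mu * (x * Rpower y (mu - 1 + al + be) + y * Rpower x (mu - 1 + al + be))
          <= Rpower 2 (mu - 1) * mu
             * (x * (z * (1 - / p) * Rpower y (mu + gam) + Rpower z (1 - p) / p * y)
                + y * (z * (1 - / p) * Rpower x (mu + gam) + Rpower z (1 - p) / p * x)))
    by (apply Rmult_le_compat_l; lra).
  lra.
Qed.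

(* The Young parameter z is chosen so that, while M_1 <= sig, the mixed term M_1 M_{mu + gamma}
   costs exactly half of the removal term R_* M_{mu + gamma}. *)
Lemma young_constant_eq As Rs sig mu p :
  0 < As -> 0 < Rs -> 0 < sig -> 0 < mu -> 1 < p ->
  let D := Rpower 2 (mu - 1) * mu in
  let z := p / (p - 1) * Rs / (2 * As * D * sig) in
  As * D * (z * (1 - / p)) * sig = Rs / 2 /\
  As * D * (Rpower z (1 - p) / p) * sig ^ 2
  = Rs * (Rpower (Rpower 2 mu * mu) p * Rpower (p / (p - 1)) (1 - p) / p
          * Rpower (As / Rs) p * Rpower sig (1 + p) / 2).
Proof.
  intros HA HR Hs Hm Hp D z.
  assert (HD : 0 < D) by (unfold D; Rpos).
  split; [unfold z; field; repeat split; lra|].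
  assert (Hz : 0 < z) by (unfold z, Rdiv; Rpos).
  apply ln_inv; [unfold Rdiv; Rpos | unfold Rdiv; Rpos |].
  unfold z, D, Rdiv. simpl. rewrite Rmult_1_r.
  repeat first [ rewrite ln_mult by Rpos | rewrite ln_Rinv by Rpos | rewrite ln_Rpower ].
  field; lra.
Qed.

Lemma continuity_pt_ball f x : continuity_pt f x -> forall eps, 0 < eps ->
  exists alp, 0 < alp /\ forall y, Rabs (y - x) < alp -> Rabs (f y - f x) < eps.
Proof.
  intros H eps He. destruct (H eps He) as [alp [Ha Hy]]. exists alp; split; auto.
  intros y Hyx. destruct (Req_dec y x) as [->|Hne].
  - rewrite Rminus_diag, Rabs_R0; auto.
  - apply (Hy y). repeat split; auto.
Qed.

Lemma le_at_lub_of_continuity_pt f E X l :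
  continuity_pt f l -> is_lub E l -> (forall s, E s -> f s <= X) -> (exists s, E s) -> f l <= X.
Proof.
  intros Hc [Hub Hlub] HE Hex. destruct (Rle_dec (f l) X) as [|Hn]; auto.
  destruct (continuity_pt_ball f l Hc (f l - X)) as [alp [Ha Hy]]; [lra|].
  assert (Hnub : ~ is_upper_bound E (l - alp / 2)) by (intros Hu; specialize (Hlub _ Hu); lra).
  apply not_all_ex_not in Hnub as [s Hs]. apply imply_to_and in Hs as [HEs Hs].
  specialize (Hub s HEs). specialize (HE s HEs).
  assert (Rabs (s - l) < alp) by (apply Rabs_def1; lra).
  specialize (Hy s H). apply Rabs_def2 in Hy. lra.
Qed.

Section Dissipation.

Variables (f df : R -> R) (t0 X dl : R).
Hypothesis dl_pos : 0 < dl.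
Hypothesis f_deriv : forall t, t0 <= t -> derivable_pt_lim f t (df t).
Hypothesis df_le : forall t, t0 <= t -> X <= f t -> df t <= - dl.

Lemma decrease_above a b : t0 <= a -> a <= b -> (forall s, a <= s <= b -> X < f s) ->
  f b <= f a - dl * (b - a).
Proof.
  intros Ha Hab Hs. destruct (Req_dec a b) as [->|Hne]; [lra|].
  destruct (MVT_cor2 f df a b ltac:(lra) ltac:(intros; apply f_deriv; lra)) as [s [E Hs']].
  assert (df s <= - dl) by (apply df_le; [lra | left; apply Hs; lra]).
  assert (df s * (b - a) <= - dl * (b - a)) by (apply Rmult_le_compat_r; lra).
  lra.
Qed.

(* Once below X, f cannot rise above it; starting from f t0 <= B it must get below X within time B / dl. *)
Lemma eventually_le_of_dissipative B : 0 <= X -> f t0 <= B ->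
  forall t, t0 + Rmax 0 B / dl <= t -> f t <= X.
Proof.
  intros HX Hf0 t1 Ht1. destruct (Rle_dec (f t1) X) as [|Hc]; auto. exfalso.
  assert (HBd : 0 <= Rmax 0 B / dl)
    by (apply Rmult_le_pos; [apply Rmax_l | left; apply Rinv_0_lt_compat; auto]).
  set (E := fun s => t0 <= s <= t1 /\ f s <= X).
  destruct (classic (exists s, E s)) as [Hex|Hne].
  - destruct (completeness E) as [l Hl]; [exists t1; intros s Hs; apply Hs | auto |].
    destruct Hex as [s0 Hs0].
    assert (Hl0 : t0 <= l) by (pose proof (proj1 Hl s0 Hs0); unfold E in Hs0; lra).
    assert (Hl1 : l <= t1) by (apply (proj2 Hl); intros s Hs; apply Hs).
    assert (Hcl : continuity_pt f l)
      by (apply derivable_continuous_pt; exists (df l); apply f_deriv; lra).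
    assert (Hfl : f l <= X)
      by (apply (le_at_lub_of_continuity_pt f E X l Hcl Hl); [intros s Hs; apply Hs | eauto]).
    assert (Hgt : forall s, l < s <= t1 -> X < f s).
    { intros s Hs. apply Rnot_le_lt. intros Hfs.
      assert (E s) by (split; lra). pose proof (proj1 Hl s H). lra. }
    assert (Hlt : l < t1) by (destruct (Req_dec l t1); [subst; lra | lra]).
    destruct (continuity_pt_ball f l Hcl (dl * (t1 - l) / 2)) as [alp [Ha Hy]]; [nra|].
    set (s2 := l + Rmin alp (t1 - l) / 2).
    pose proof (Rmin_pos alp (t1 - l) Ha ltac:(lra)). pose proof (Rmin_l alp (t1 - l)).
    pose proof (Rmin_r alp (t1 - l)).
    assert (Hs2 : Rabs (s2 - l) < alp) by (unfold s2; apply Rabs_def1; lra).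
    specialize (Hy s2 Hs2). apply Rabs_def2 in Hy.
    pose proof (decrease_above s2 t1 ltac:(unfold s2; lra) ltac:(unfold s2; lra)
                  ltac:(intros s Hs; apply Hgt; unfold s2 in Hs; lra)).
    assert (dl * (t1 - s2) >= dl * (t1 - l) / 2) by (unfold s2; nra).
    lra.
  - pose proof (decrease_above t0 t1 ltac:(lra) ltac:(lra)
                  ltac:(intros s Hs; apply Rnot_le_lt; intros Hfs; apply Hne; exists s; split; lra)).
    assert (dl * (Rmax 0 B / dl) = Rmax 0 B) by (field; lra).
    assert (dl * (t1 - t0) >= dl * (Rmax 0 B / dl)) by (apply Rle_ge, Rmult_le_compat_l; lra).
    pose proof (Rmax_r 0 B). lra.
Qed.

End Dissipation.

Definition dsum (h : nat -> nat -> R) N := fsum (fun i => fsum (fun j => h (S i) (S j)) N) N.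

Lemma dsum_sym h N : dsum h N = dsum (fun i j => h j i) N.
Proof. apply fsum_exchange. Qed.

Lemma dsum_add h g N : dsum (fun i j => h i j + g i j) N = dsum h N + dsum g N.
Proof. unfold dsum. rewrite <- fsum_add. apply fsum_ext. intros. apply fsum_add. Qed.

Lemma dsum_scal h x N : dsum (fun i j => x * h i j) N = x * dsum h N.
Proof. unfold dsum. rewrite <- fsum_scal. apply fsum_ext. intros. apply fsum_scal. Qed.

Lemma dsum_le h g N :
  (forall i j, (1 <= i)%nat -> (1 <= j)%nat -> h i j <= g i j) -> dsum h N <= dsum g N.
Proof. intros H. apply fsum_le; intros. apply fsum_le; intros. apply H; lia. Qed.

Lemma dsum_mul f g N : dsum (fun i j => f i * g j) N = fsum (fun i => f (S i)) N * fsum (fun j => g (S j)) N.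
Proof. apply fsum_mul_fsum. Qed.

Definition kpow nu (k : nat) := Rpower (INR k) nu.

Lemma kpow_1 k : (1 <= k)%nat -> kpow 1 k = INR k.
Proof. intros; apply Rpower_1, lt_0_INR; lia. Qed.

Definition tmoment (c : nat -> R -> R) nu N t := fsum (fun m => kpow nu (S m) * c (S m) t) N.

Lemma moment_le_of_tmoment_le nu (c : nat -> R -> R) t L B :
  moment_is nu (fun k => c k t) L -> (forall N, tmoment c nu N t <= B) -> L <= B.
Proof. apply infinite_sum_le. Qed.

Lemma derivable_pt_lim_tmoment (c : nat -> R -> R) (dc : nat -> R) nu N t :
  (forall k, (1 <= k)%nat -> derivable_pt_lim (c k) t (dc k)) ->
  derivable_pt_lim (tmoment c nu N) t (fsum (fun m => kpow nu (S m) * dc (S m)) N).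
Proof.
  intros H. apply (derivable_pt_lim_fsum (fun m s => kpow nu (S m) * c (S m) s)).
  intros m Hm. apply derivable_pt_lim_scal, H. lia.
Qed.

Section Coagulation.

Variables (a : nat -> nat -> R) (s r : nat -> R) (c : nat -> R -> R).

Hypothesis a_sym : forall k l, (1 <= k)%nat -> (1 <= l)%nat -> a k l = a l k.
Hypothesis a_ge0 : forall k l, (1 <= k)%nat -> (1 <= l)%nat -> 0 <= a k l.

Section FixedTime.

Variable t : R.
Hypothesis ct_ge0 : forall k, (1 <= k)%nat -> 0 <= c k t.

Lemma tmoment_ge0 nu N : 0 <= tmoment c nu N t.
Proof.
  apply fsum_ge0. intros m Hm. apply Rmult_le_pos; [left; apply Rpower_pos | apply ct_ge0; lia].
Qed.

Lemma tmoment_le_order nu1 nu2 N : nu1 <= nu2 -> tmoment c nu1 N t <= tmoment c nu2 N t.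
Proof.
  intros Hn. apply fsum_le. intros m Hm. apply Rmult_le_compat_r; [apply ct_ge0; lia|].
  apply Rle_Rpower; auto. apply (le_INR 1). lia.
Qed.

Lemma tmoment_le_moment nu L N : moment_is nu (fun k => c k t) L -> tmoment c nu N t <= L.
Proof.
  intros H. apply fsum_le_infinite_sum; auto. intros i.
  apply Rmult_le_pos; [left; apply Rpower_pos | apply ct_ge0; lia].
Qed.

Lemma tmoment_interpolate mu e th lam N : 0 < lam -> 0 <= th < 1 -> mu = th + (1 - th) * e ->
  tmoment c mu N t
  <= th * lam * tmoment c 1 N t + (1 - th) * Rpower lam (- (th / (1 - th))) * tmoment c e N t.
Proof.
  intros Hl Ht ->. unfold tmoment. rewrite <- !fsum_scal, <- fsum_add. apply fsum_le.
  intros m Hm. rewrite kpow_1 by lia. unfold kpow.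
  pose proof (Rpower_interpolate (INR (S m)) lam th e ltac:(apply lt_0_INR; lia) Hl Ht) as H.
  apply Rmult_le_compat_r with (r := c (S m) t) in H; [nra | apply ct_ge0; lia].
Qed.

Lemma source_le nu L N : (forall k, (1 <= k)%nat -> 0 <= s k) ->
  moment_is nu s L -> fsum (fun m => kpow nu (S m) * s (S m)) N <= L.
Proof.
  intros Hs HL. apply fsum_le_infinite_sum; auto. intros i.
  apply Rmult_le_pos; [left; apply Rpower_pos | apply Hs; lia].
Qed.

Lemma removal_ge nu gamma Rstar N :
  (forall k, (1 <= k)%nat -> Rstar * Rpower (INR k) gamma <= r k) ->
  Rstar * tmoment c (nu + gamma) N t <= fsum (fun m => kpow nu (S m) * r (S m) * c (S m) t) N.
Proof.
  intros Hr. unfold tmoment. rewrite <- fsum_scal. apply fsum_le. intros m Hm.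
  unfold kpow. rewrite Rpower_plus.
  pose proof (Hr (S m) ltac:(lia)). pose proof (ct_ge0 (S m) ltac:(lia)).
  pose proof (Rpower_pos (INR (S m)) nu).
  assert (Rstar * Rpower (INR (S m)) gamma * (Rpower (INR (S m)) nu * c (S m) t)
          <= r (S m) * (Rpower (INR (S m)) nu * c (S m) t)) by (apply Rmult_le_compat_r; nra).
  nra.
Qed.

(* Truncation only helps: the gain term, a sum over the triangle i + j <= N + 1, is enlarged to the
   square [1, N]^2, the loss term is bounded below by its part on that square, and the symmetry of
   a then combines both into the weight increment kpow nu (i + j) - kpow nu i - kpow nu j. *)
Lemma weighted_rhs_le nu (Lf : nat -> R) N :
  (forall k, (1 <= k)%nat -> forall M, fsum (fun n => a k (S n) * c (S n) t) M <= Lf k) ->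
  fsum (fun m => kpow nu (S m) * rhsE a s r c (S m) t (Lf (S m))) N
  <= / 2 * dsum (fun i j => (kpow nu (i + j) - kpow nu i - kpow nu j) * a i j * c i t * c j t) N
     + fsum (fun m => kpow nu (S m) * s (S m)) N
     - fsum (fun m => kpow nu (S m) * r (S m) * c (S m) t) N.
Proof.
  intros HL.
  set (h := fun i j => kpow nu (i + j) * (a i j * c i t * c j t)).
  set (g := fun i j => kpow nu i * (a i j * c i t * c j t)).
  set (loss := fsum (fun m => kpow nu (S m) * c (S m) t * Lf (S m)) N).
  assert (Egain : fsum (fun m => kpow nu (S m) * rhsE a s r c (S m) t (Lf (S m))) N
     = / 2 * fsum (fun i => fsum (fun j => h (S i) (S j)) (N - S i)) N - loss
       + fsum (fun m => kpow nu (S m) * s (S m)) N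
       - fsum (fun m => kpow nu (S m) * r (S m) * c (S m) t) N).
  { unfold loss. rewrite <- fsum_antidiagonal, <- fsum_scal, <- fsum_sub, <- fsum_add, <- fsum_sub.
    apply fsum_ext. intros m Hm. unfold rhsE. replace (S m - 1)%nat with m by lia.
    rewrite (fsum_ext (fun i => h (S m - S i)%nat (S i))
               (fun i => kpow nu (S m) * (a (S m - S i)%nat (S i) * c (S m - S i)%nat t * c (S i) t)))
      by (intros i Hi; unfold h; replace (S m - S i + S i)%nat with (S m) by lia; reflexivity).
    rewrite fsum_scal. ring. }
  assert (Hloss : dsum g N <= loss).
  { apply fsum_le. intros m Hm. unfold g.
    rewrite (fsum_ext _ (fun j => (kpow nu (S m) * c (S m) t) * (a (S m) (S j) * c (S j) t)))
      by (intros; ring).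
    rewrite fsum_scal. apply Rmult_le_compat_l; [|apply HL; lia].
    apply Rmult_le_pos; [left; apply Rpower_pos | apply ct_ge0; lia]. }
  assert (Htri : fsum (fun i => fsum (fun j => h (S i) (S j)) (N - S i)) N <= dsum h N).
  { apply fsum_le. intros i Hi. apply fsum_le_len; [lia|]. intros j. unfold h.
    apply Rmult_le_pos; [left; apply Rpower_pos|].
    repeat apply Rmult_le_pos; auto; [apply a_ge0 | apply ct_ge0 | apply ct_ge0]; lia. }
  assert (Hsplit : dsum (fun i j => (kpow nu (i + j) - kpow nu i - kpow nu j) * a i j * c i t * c j t) N
                   = dsum h N + (-1) * dsum g N + (-1) * dsum (fun i j => g j i) N).
  { rewrite <- (dsum_scal g), <- (dsum_scal (fun i j => g j i)), <- !dsum_add.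
    apply fsum_ext; intros i Hi; apply fsum_ext; intros j Hj.
    unfold h, g. rewrite (a_sym (S j) (S i)) by lia. ring. }
  rewrite Egain, Hsplit, <- (dsum_sym g). lra.
Qed.

Lemma coag_term_1_eq0 N :
  dsum (fun i j => (kpow 1 (i + j) - kpow 1 i - kpow 1 j) * a i j * c i t * c j t) N = 0.
Proof.
  rewrite <- (fsum_const0 N). apply fsum_ext. intros i Hi.
  rewrite <- (fsum_const0 N). apply fsum_ext. intros j Hj.
  rewrite !kpow_1, plus_INR by lia. ring.
Qed.

Lemma coag_term_le mu gamma alpha beta Astar z p N :
  1 <= mu -> 0 <= alpha -> 0 <= beta -> 0 < Astar -> 0 < z -> 1 < p ->
  mu - 2 + alpha + beta = (mu + gamma - 1) * (1 - / p) ->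
  (forall k l, (1 <= k)%nat -> (1 <= l)%nat ->
     a k l <= Astar * (Rpower (INR k) alpha * Rpower (INR l) beta
                       + Rpower (INR k) beta * Rpower (INR l) alpha)) ->
  / 2 * dsum (fun i j => (kpow mu (i + j) - kpow mu i - kpow mu j) * a i j * c i t * c j t) N
  <= Astar * (Rpower 2 (mu - 1) * mu) * (z * (1 - / p))
       * (tmoment c 1 N t * tmoment c (mu + gamma) N t)
     + Astar * (Rpower 2 (mu - 1) * mu) * (Rpower z (1 - p) / p) * tmoment c 1 N t ^ 2.
Proof.
  intros Hm Ha Hb HA Hz Hp He Haub.
  set (K1 := Astar * (Rpower 2 (mu - 1) * mu) * (z * (1 - / p))).
  set (K2 := Astar * (Rpower 2 (mu - 1) * mu) * (Rpower z (1 - p) / p)).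
  set (f := fun i => kpow 1 i * c i t). set (g := fun i => kpow (mu + gamma) i * c i t).
  assert (HS : dsum (fun i j => (kpow mu (i + j) - kpow mu i - kpow mu j) * a i j * c i t * c j t) N
               <= dsum (fun i j => K1 * (f i * g j + g i * f j) + K2 * 2 * (f i * f j)) N).
  { apply dsum_le. intros i j Hi Hj. unfold f, g, K1, K2. rewrite !kpow_1 by auto.
    unfold kpow. rewrite plus_INR.
    assert (Hx : 0 < INR i) by (apply lt_0_INR; lia). assert (Hy : 0 < INR j) by (apply lt_0_INR; lia).
    pose proof (coag_kernel_weight_le (INR i) (INR j) mu gamma alpha beta z p Hx Hy Hm Ha Hb Hz Hp He)
      as HW.
    assert (Hu : 0 <= Rpower (INR i + INR j) mu - Rpower (INR i) mu - Rpower (INR j) mu)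
      by (pose proof (Rpower_superadditive _ _ mu Hx Hy Hm); lra).
    assert (Hua : (Rpower (INR i + INR j) mu - Rpower (INR i) mu - Rpower (INR j) mu) * a i j
                  <= (Rpower (INR i + INR j) mu - Rpower (INR i) mu - Rpower (INR j) mu)
                     * (Astar * (Rpower (INR i) alpha * Rpower (INR j) beta
                                 + Rpower (INR i) beta * Rpower (INR j) alpha)))
      by (apply Rmult_le_compat_l; [lra | apply Haub; lia]).
    apply Rmult_le_compat_l with (r := Astar) in HW; [|lra].
    assert (Hcc : 0 <= c i t * c j t) by (pose proof (ct_ge0 i Hi); pose proof (ct_ge0 j Hj); nra).
    assert (Hfin : (Rpower (INR i + INR j) mu - Rpower (INR i) mu - Rpower (INR j) mu) * a i j
                   * (c i t * c j t)
                   <= Astar * (Rpower 2 (mu - 1) * mu * (z * (1 - / p))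
                        * (INR i * Rpower (INR j) (mu + gamma) + Rpower (INR i) (mu + gamma) * INR j)
                        + Rpower 2 (mu - 1) * mu * (Rpower z (1 - p) / p) * (2 * (INR i * INR j)))
                     * (c i t * c j t))
      by (apply Rmult_le_compat_r; [auto | lra]).
    eapply Rle_trans; [|eapply Rle_trans; [exact Hfin | right; ring]]. right; ring. }
  rewrite dsum_add, dsum_scal, dsum_scal, dsum_add, !dsum_mul in HS.
  unfold f, g in HS. unfold tmoment. simpl. lra.
Qed.

Lemma tmoment_interpolate_lower mu gamma A sig N :
  1 < mu -> 0 < gamma -> 0 < A -> 0 < sig -> tmoment c 1 N t <= sig ->
  Rpower (A * Rpower sig (gamma / (mu - 1))) (1 / (1 + gamma / (mu - 1))) <= tmoment c mu N t ->
  A <= tmoment c (mu + gamma) N t.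
Proof.
  intros Hm Hg HA Hs Hm1 Hlow.
  set (rho := gamma / (mu - 1)) in *.
  set (th := gamma / (mu + gamma - 1)).
  set (Xb := Rpower (A * Rpower sig rho) (1 / (1 + rho))) in *.
  assert (Hrho : 0 < rho) by (unfold rho, Rdiv; Rpos).
  assert (Hth : 0 <= th < 1).
  { unfold th. split; [left; unfold Rdiv; Rpos|].
    apply (Rmult_lt_reg_r (mu + gamma - 1)); [lra|].
    unfold Rdiv. rewrite Rmult_assoc, Rinv_l by lra. lra. }
  assert (Hthr : th / (1 - th) = rho) by (unfold th, rho; field; split; lra).
  set (lam := Xb / sig).
  assert (Hlam : 0 < lam) by (unfold lam, Xb, Rdiv; Rpos).
  assert (Hid : Xb * Rpower lam rho = A).
  { apply ln_inv; [unfold lam, Xb, Rdiv; Rpos | auto |].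
    unfold lam, Xb, Rdiv.
    repeat first [ rewrite ln_mult by Rpos | rewrite ln_Rinv by Rpos | rewrite ln_Rpower ].
    field; lra. }
  pose proof (tmoment_interpolate mu (mu + gamma) th lam N Hlam Hth
                ltac:(unfold th; field; lra)) as HI.
  rewrite Hthr in HI.
  pose proof (tmoment_ge0 1 N).
  assert (Hm1' : th * lam * tmoment c 1 N t <= th * Xb).
  { replace (th * Xb) with (th * lam * sig) by (unfold lam; field; lra).
    apply Rmult_le_compat_l; [unfold lam, Xb, Rdiv in *; nra | auto]. }
  assert (HXb : Xb <= Rpower lam (- rho) * tmoment c (mu + gamma) N t).
  { apply (Rmult_le_reg_l (1 - th)); [lra|]. nra. }
  rewrite <- Hid. apply Rmult_le_compat_r with (r := Rpower lam rho) in HXb; [|left; Rpos].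
  replace (Rpower lam (- rho) * tmoment c (mu + gamma) N t * Rpower lam rho)
    with (Rpower lam (rho + - rho) * tmoment c (mu + gamma) N t) in HXb
    by (rewrite Rpower_plus; ring).
  rewrite Rplus_opp_r, Rpower_O in HXb by lra. lra.
Qed.

End FixedTime.

Hypothesis c_ge0 : forall k, (1 <= k)%nat -> forall t, 0 <= t -> 0 <= c k t.
Hypothesis c_eq : forall k, (1 <= k)%nat -> forall t, 0 < t -> exists L,
  infinite_sum (fun n => a k (S n) * c (S n) t) L /\ derivable_pt_lim (c k) t (rhsE a s r c k t L).

Lemma tmoment_derivative_le nu N : exists df : R -> R, forall t, 0 < t ->
  derivable_pt_lim (tmoment c nu N) t (df t) /\
  df t <= / 2 * dsum (fun i j => (kpow nu (i + j) - kpow nu i - kpow nu j) * a i j * c i t * c j t) N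
          + fsum (fun m => kpow nu (S m) * s (S m)) N
          - fsum (fun m => kpow nu (S m) * r (S m) * c (S m) t) N.
Proof.
  set (Lf := fun t k => epsilon (inhabits 0) (infinite_sum (fun n => a k (S n) * c (S n) t))).
  assert (HLf : forall t k, 0 < t -> (1 <= k)%nat ->
    infinite_sum (fun n => a k (S n) * c (S n) t) (Lf t k)
    /\ derivable_pt_lim (c k) t (rhsE a s r c k t (Lf t k))).
  { intros t k Ht Hk. destruct (c_eq k Hk t Ht) as [L [HL Hd]].
    assert (HLf : infinite_sum (fun n => a k (S n) * c (S n) t) (Lf t k))
      by (apply epsilon_spec; eauto).
    now rewrite <- (uniqueness_sum _ _ _ HL HLf). }
  exists (fun t => fsum (fun m => kpow nu (S m) * rhsE a s r c (S m) t (Lf t (S m))) N).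
  intros t Ht. split.
  - apply (derivable_pt_lim_tmoment c (fun k => rhsE a s r c k t (Lf t k))).
    intros k Hk. apply HLf; auto.
  - apply weighted_rhs_le; [intros k Hk; apply c_ge0; [exact Hk | lra]|].
    intros k Hk M. apply fsum_le_infinite_sum; [apply HLf; auto|].
    intros n. apply Rmult_le_pos; [apply a_ge0; lia | apply c_ge0; [lia | lra]].
Qed.

Variables (Rstar gamma : R).
Hypothesis Rstar_pos : 0 < Rstar.
Hypothesis r_ge : forall k, (1 <= k)%nat -> Rstar * Rpower (INR k) gamma <= r k.
Hypothesis s_ge0 : forall k, (1 <= k)%nat -> 0 <= s k.
Hypothesis c_moment : forall nu, 1 <= nu -> forall t, 0 < t ->
  exists L, moment_is nu (fun k => c k t) L.

(* The coagulation term conserves the first moment, so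
   d/dt M_1 <= s_1 - R_* M_{1 + gamma} <= s_1 - R_* M_1. *)
Lemma tmoment_1_eventually_le L1 sig : 0 <= gamma -> moment_is 1 s L1 ->
  0 < sig -> L1 < Rstar * sig ->
  exists T1, 1 <= T1 /\ forall N t, T1 <= t -> tmoment c 1 N t <= sig.
Proof.
  intros Hg HL1 Hsig Hdl.
  destruct (c_moment 1 (Rle_refl 1) 1 Rlt_0_1) as [L0 HL0].
  set (dl := Rstar * sig - L1).
  exists (1 + Rmax 0 L0 / dl). split.
  { assert (0 <= Rmax 0 L0 / dl)
      by (apply Rmult_le_pos; [apply Rmax_l | left; apply Rinv_0_lt_compat; unfold dl; lra]).
    lra. }
  intros N. destruct (tmoment_derivative_le 1 N) as [df Hdf].
  apply (eventually_le_of_dissipative (tmoment c 1 N) df 1 sig dl); try (unfold dl; lra).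
  - intros t Ht. apply Hdf. lra.
  - intros t Ht Hf. destruct (Hdf t ltac:(lra)) as [_ Hb].
    assert (Hct : forall k, (1 <= k)%nat -> 0 <= c k t) by (intros; apply c_ge0; [auto | lra]).
    rewrite coag_term_1_eq0 in Hb.
    pose proof (source_le 1 L1 N s_ge0 HL1).
    pose proof (removal_ge t Hct 1 gamma Rstar N r_ge).
    pose proof (tmoment_le_order t Hct 1 (1 + gamma) N ltac:(lra)).
    unfold dl. nra.
  - apply tmoment_le_moment; auto. intros k Hk. apply c_ge0; [auto | lra].
Qed.

Lemma tmoment_mu_dissipative alpha beta Astar mu p Lmu sig Y T1 :
  0 <= alpha -> 0 <= beta -> 0 < Astar -> 1 <= mu -> 1 < p ->
  mu - 2 + alpha + beta = (mu + gamma - 1) * (1 - / p) ->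
  (forall k l, (1 <= k)%nat -> (1 <= l)%nat ->
     a k l <= Astar * (Rpower (INR k) alpha * Rpower (INR l) beta
                       + Rpower (INR k) beta * Rpower (INR l) alpha)) ->
  moment_is mu s Lmu -> 0 < sig -> 0 < T1 ->
  Lmu + Rstar * (Rpower (Rpower 2 mu * mu) p * Rpower (p / (p - 1)) (1 - p) / p
                 * Rpower (Astar / Rstar) p * Rpower sig (1 + p) / 2) <= Rstar * Y ->
  (forall N t, T1 <= t -> tmoment c 1 N t <= sig) ->
  forall N, exists df : R -> R, forall t, T1 <= t ->
    derivable_pt_lim (tmoment c mu N) t (df t)
    /\ df t <= Rstar * Y - Rstar / 2 * tmoment c (mu + gamma) N t.
Proof.
  intros Ha Hb HA Hm Hp He Haub HLmu Hsig HT1 HY HM1 N.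
  destruct (young_constant_eq Astar Rstar sig mu p HA Rstar_pos Hsig ltac:(lra) Hp) as [HK1 HK2].
  set (D := Rpower 2 (mu - 1) * mu) in *.
  set (z := p / (p - 1) * Rstar / (2 * Astar * D * sig)) in *.
  assert (Hz : 0 < z) by (unfold z, D, Rdiv; Rpos).
  destruct (tmoment_derivative_le mu N) as [df Hdf]. exists df.
  intros t Ht. destruct (Hdf t ltac:(lra)) as [Hd Hb']. split; auto.
  assert (Hct : forall k, (1 <= k)%nat -> 0 <= c k t) by (intros; apply c_ge0; [auto | lra]).
  pose proof (coag_term_le t Hct mu gamma alpha beta Astar z p N Hm Ha Hb HA Hz Hp He Haub) as HQ.
  pose proof (source_le mu Lmu N s_ge0 HLmu).
  pose proof (removal_ge t Hct mu gamma Rstar N r_ge).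
  pose proof (HM1 N t Ht). pose proof (tmoment_ge0 t Hct 1 N).
  pose proof (tmoment_ge0 t Hct (mu + gamma) N).
  set (m1 := tmoment c 1 N t) in *. set (M := tmoment c (mu + gamma) N t) in *.
  fold D in HQ.
  assert (HK1' : Astar * D * (z * (1 - / p)) * (m1 * M) <= Rstar / 2 * M).
  { assert (0 < / p < 1) by (split; [Rpos | rewrite <- Rinv_1; apply Rinv_lt_contravar; lra]).
    set (K1 := Astar * D * (z * (1 - / p))) in *.
    assert (0 <= K1) by (apply Rmult_le_pos; [left; unfold D; Rpos | apply Rmult_le_pos; lra]).
    assert (0 <= K1 * M) by (apply Rmult_le_pos; auto).
    rewrite <- HK1. nra. }
  assert (HK2' : Astar * D * (Rpower z (1 - p) / p) * m1 ^ 2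
                 <= Astar * D * (Rpower z (1 - p) / p) * sig ^ 2).
  { apply Rmult_le_compat_l; [left; unfold D, Rdiv; Rpos | simpl; nra]. }
  lra.
Qed.

Lemma tmoment_mu_eventually_le mu Y sig T1 :
  1 < mu -> 0 < gamma -> 0 < Y -> 0 < sig -> 0 < T1 ->
  (forall N t, T1 <= t -> tmoment c 1 N t <= sig) ->
  (forall N, exists df : R -> R, forall t, T1 <= t ->
     derivable_pt_lim (tmoment c mu N) t (df t)
     /\ df t <= Rstar * Y - Rstar / 2 * tmoment c (mu + gamma) N t) ->
  exists T, T1 <= T /\ forall N t, T <= t ->
    tmoment c mu N t <= 4 * Y
    /\ tmoment c mu N t <= Rpower (4 * Y * Rpower sig (gamma / (mu - 1))) (1 / (1 + gamma / (mu - 1))).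
Proof.
  intros Hm Hg HY Hsig HT1 HM1 Hdiss.
  destruct (c_moment mu ltac:(lra) T1 HT1) as [L2 HL2].
  assert (Hdl : 0 < Rstar * Y) by Rpos.
  exists (T1 + Rmax 0 L2 / (Rstar * Y)). split.
  { assert (0 <= Rmax 0 L2 / (Rstar * Y))
      by (apply Rmult_le_pos; [apply Rmax_l | left; Rpos]). lra. }
  intros N t Ht. destruct (Hdiss N) as [df Hdf].
  assert (Hct : forall t, T1 <= t -> forall k, (1 <= k)%nat -> 0 <= c k t)
    by (intros; apply c_ge0; [auto | lra]).
  assert (Hinit : tmoment c mu N T1 <= L2) by (apply tmoment_le_moment; auto; apply Hct; lra).
  split.
  - apply (eventually_le_of_dissipative (tmoment c mu N) df T1 (4 * Y) (Rstar * Y) Hdl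
             ltac:(intros; apply Hdf; auto)) with (B := L2); auto; try lra.
    intros u Hu Hf. destruct (Hdf u Hu) as [_ Hb].
    pose proof (tmoment_le_order u (Hct u Hu) mu (mu + gamma) N ltac:(lra)). nra.
  - apply (eventually_le_of_dissipative (tmoment c mu N) df T1 _ (Rstar * Y) Hdl
             ltac:(intros; apply Hdf; auto)) with (B := L2); auto; [|left; Rpos].
    intros u Hu Hf. destruct (Hdf u Hu) as [_ Hb].
    pose proof (tmoment_interpolate_lower u (Hct u Hu) mu gamma (4 * Y) sig N
                  Hm Hg ltac:(lra) Hsig (HM1 N u Hu) Hf).
    nra.
Qed.

End Coagulation.

Lemma global_solution_moment a s r c cin : global_solution a s r c cin ->
  forall nu, 1 <= nu -> forall t, 0 < t -> exists L, moment_is nu (fun k => c k t) L.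
Proof.
  intros [Hc0 [_ [_ [_ [HC1 _]]]]] nu Hnu t Ht.
  destruct (HC1 nu Hnu) as [dc [Hw _]]. destruct (proj1 (Hw t Ht)) as [L HL].
  exists L. unfold moment_is. eapply infinite_sum_ext; [|exact HL].
  intros n. simpl. rewrite Rabs_pos_eq; [reflexivity | apply Hc0; [lia | lra]].
Qed.

Lemma exponent_conditions alpha beta gamma mu :
  Rmax 0 (alpha + beta - 1) < gamma -> Rmax (2 - alpha - beta) 1 < mu ->
  let p := (mu + gamma - 1) / (1 + gamma - alpha - beta) in
  0 < gamma /\ 1 < mu /\ 1 < p /\ mu - 2 + alpha + beta = (mu + gamma - 1) * (1 - / p).
Proof.
  intros Hg Hm p.
  pose proof (Rmax_l 0 (alpha + beta - 1)). pose proof (Rmax_r 0 (alpha + beta - 1)).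
  pose proof (Rmax_l (2 - alpha - beta) 1). pose proof (Rmax_r (2 - alpha - beta) 1).
  repeat split; try lra.
  - unfold p. apply (Rmult_lt_reg_r (1 + gamma - alpha - beta)); [lra|].
    unfold Rdiv. rewrite Rmult_assoc, Rinv_l by lra. lra.
  - unfold p. field. lra.
Qed.

Lemma Rpower_root2_scale s p : 0 < s -> 0 < 1 + p ->
  s < Rpower 2 (1 / (1 + p)) * s /\ Rpower (Rpower 2 (1 / (1 + p)) * s) (1 + p) = 2 * Rpower s (1 + p).
Proof.
  intros Hs Hp. rewrite <- Rpower_mult_distr, Rpower_mult by Rpos.
  replace (1 / (1 + p) * (1 + p)) with 1 by (field; lra). rewrite Rpower_1 by lra.
  pose proof (Rpower_lt 2 0 (1 / (1 + p)) ltac:(lra) ltac:(unfold Rdiv; Rpos)) as H.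
  rewrite Rpower_O in H by lra. split; [nra | reflexivity].
Qed.

Lemma final_constant_le K1 K2 K3 s smu rho p : 0 < K1 -> 0 < K2 -> 0 < K3 -> 0 < s -> 0 < smu ->
  0 < rho -> 1 < p ->
  Rpower (4 * (K1 * K2 / p * K3 * Rpower s (1 + p) + smu) * Rpower (Rpower 2 (1 / (1 + p)) * s) rho)
         (1 / (1 + rho))
  <= 2 * Rpower (Rpower 2 (2 + rho) * K1 * K2 / p * K3 * Rpower s (1 + p + rho)
                 + Rpower 2 (2 + rho) * smu * Rpower s rho) (1 / (1 + rho)).
Proof.
  intros HK1 HK2 HK3 Hs Hsmu Hrho Hp.
  set (Y := K1 * K2 / p * K3 * Rpower s (1 + p) + smu).
  assert (HY : 0 < Y) by (unfold Y, Rdiv; Rpos).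
  replace (Rpower 2 (2 + rho) * K1 * K2 / p * K3 * Rpower s (1 + p + rho)
           + Rpower 2 (2 + rho) * smu * Rpower s rho)
    with (Rpower 2 (2 + rho) * Rpower s rho * Y)
    by (unfold Y; rewrite (Rpower_plus (1 + p) rho s); field; lra).
  assert (H2rho : Rpower 2 (1 / (1 + p) * rho) <= Rpower 2 rho).
  { apply Rle_Rpower; [lra|]. rewrite <- (Rmult_1_l rho) at 2.
    apply Rmult_le_compat_r; [lra|]. unfold Rdiv. rewrite Rmult_1_l, <- Rinv_1.
    apply Rinv_le_contravar; lra. }
  assert (Hbase : 4 * Y * Rpower (Rpower 2 (1 / (1 + p)) * s) rho
                  <= Rpower 2 (2 + rho) * Rpower s rho * Y).
  { rewrite <- Rpower_mult_distr, Rpower_mult, Rpower_plus by Rpos.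
    replace (Rpower 2 2) with 4
      by (replace 2 with (1 + 1) at 2 by ring; rewrite Rpower_plus, Rpower_1 by lra; ring).
    assert (0 <= 4 * Y * Rpower s rho) by (left; Rpos).
    pose proof (Rmult_le_compat_l _ _ _ H H2rho). lra. }
  pose proof (Rpower_pos (Rpower 2 (2 + rho) * Rpower s rho * Y) (1 / (1 + rho))).
  eapply Rle_trans; [apply Rle_Rpower_l; [left; unfold Rdiv; Rpos | split; [Rpos | exact Hbase]] | lra].
Qed.
Theorem mainTheorem8
  (a : nat -> nat -> R) (r s : nat -> R)
  (Astar alpha beta Rstar gamma : R) (sf : R -> R)
  (hA : 0 < Astar) (halpha : 0 <= alpha) (hbeta : beta <= 1)
  (hab : alpha <= beta)
  (hsym : forall k l, (1 <= k)%nat -> (1 <= l)%nat -> a k l = a l k)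
  (ha0 : forall k l, (1 <= k)%nat -> (1 <= l)%nat -> 0 <= a k l)
  (haub : forall k l, (1 <= k)%nat -> (1 <= l)%nat ->
     a k l <= Astar * (Rpower (INR k) alpha * Rpower (INR l) beta
                       + Rpower (INR k) beta * Rpower (INR l) alpha))
  (hR : 0 < Rstar) (hgamma : Rmax 0 (alpha + beta - 1) < gamma)
  (hr : forall k, (1 <= k)%nat -> Rstar * Rpower (INR k) gamma <= r k)
  (hs0 : forall k, (1 <= k)%nat -> 0 <= s k)
  (hsf : forall m, 0 <= m -> 0 < sf m /\
     exists L, moment_is m s L /\ L <= sf m)
  (c : nat -> R -> R) (cin : nat -> R)
  (hcin : in_l1 1 cin)
  (hsol : global_solution a s r c cin)
  (mu : R) (hmu : Rmax (2 - alpha - beta) 1 < mu) :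
  let rho := gamma / (mu - 1) in
  let p := (mu + gamma - 1) / (1 + gamma - alpha - beta) in
  let q := p / (p - 1) in
  let Ah := Astar / Rstar in
  let s1h := sf 1 / Rstar in
  let smuh := sf mu / Rstar in
  exists T, 0 < T /\ forall t, T <= t ->
    exists m, moment_is mu (fun k => c k t) m /\
      m <= 2 * Rpower
             (Rpower 2 (2 + rho) * Rpower (Rpower 2 mu * mu) p * Rpower q (1 - p) / p
                * Rpower Ah p * Rpower s1h (1 + p + rho)
              + Rpower 2 (2 + rho) * smuh * Rpower s1h rho)
             (1 / (1 + rho)) /\
      m <= 4 * (Rpower (Rpower 2 mu * mu) p * Rpower q (1 - p) / p
                * Rpower Ah p * Rpower s1h (1 + p) + smuh).
Proof.
  intros rho p q Ah s1h smuh.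
  pose proof (global_solution_moment _ _ _ _ _ hsol) as Hmom.
  destruct hsol as [Hc0 [_ [Hceq _]]].
  destruct (exponent_conditions alpha beta gamma mu hgamma hmu) as [Hg [Hmu [Hp He]]].
  fold p in Hp, He.
  destruct (hsf 1 ltac:(lra)) as [Hs1 [L1 [HL1 HL1b]]].
  destruct (hsf mu ltac:(lra)) as [Hsmu [Lmu [HLmu HLmub]]].
  assert (Hsf : sf 1 = Rstar * s1h /\ sf mu = Rstar * smuh) by (unfold s1h, smuh; split; field; lra).
  assert (Hs1h : 0 < s1h) by (unfold s1h, Rdiv; Rpos).
  set (C := Rpower (Rpower 2 mu * mu) p * Rpower q (1 - p) / p * Rpower Ah p).
  set (Y := C * Rpower s1h (1 + p) + smuh).
  set (sig := Rpower 2 (1 / (1 + p)) * s1h).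
  destruct (Rpower_root2_scale s1h p Hs1h ltac:(lra)) as [Hsig Hsigp]. fold sig in Hsig, Hsigp.
  assert (HY : 0 < Y) by (unfold Y, C, Rdiv, smuh; Rpos).
  destruct (tmoment_1_eventually_le a s r c hsym ha0 Hc0 Hceq Rstar gamma hR hr hs0 Hmom L1 sig
              ltac:(lra) HL1 ltac:(lra) ltac:(nra)) as [T1 [HT1 HM1]].
  assert (HYdiss : Lmu + Rstar * (C * Rpower sig (1 + p) / 2) <= Rstar * Y)
    by (rewrite Hsigp; unfold Y; lra).
  destruct (tmoment_mu_eventually_le c Hc0 Rstar gamma hR Hmom mu Y sig T1
              ltac:(lra) Hg HY ltac:(lra) ltac:(lra) HM1
              (tmoment_mu_dissipative a s r c hsym ha0 Hc0 Hceq Rstar gamma hR hr hs0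
                 alpha beta Astar mu p Lmu sig Y T1 halpha ltac:(lra) hA ltac:(lra) Hp He haub HLmu
                 ltac:(lra) ltac:(lra) HYdiss HM1)) as [T [HT HM]].
  exists T. split; [lra|]. intros t Ht.
  destruct (Hmom mu ltac:(lra) t ltac:(lra)) as [m Hm]. exists m. split; [exact Hm | split].
  - eapply Rle_trans; [apply (moment_le_of_tmoment_le mu c t m _ Hm); intros N; apply HM, Ht|].
    apply final_constant_le; unfold rho, Rdiv; Rpos.
  - apply (moment_le_of_tmoment_le mu c t m _ Hm). intros N. apply HM, Ht.
Qed.
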